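(* Let $\mathcal{P}_F$ be a quantitative definite clause specification in $\mathcal{R}(\mathcal{L})$, $\varphi$ an $\mathcal{L}$-constraint, $G$ a goal and $v$ a real number. Then $\varphi\ {}_v\!\!\rightarrow G$ is a logical consequence of $\mathcal{P}_F$ if and only if every minimal model $\mathcal{A}$ of $\mathcal{P}_F$ is a model of $\{\varphi\ {}_v\!\!\rightarrow G\}$.
   Context: A constraint language $\mathcal{L}$ consists of: a signature; a decidable infinite set $\mathsf{VAR}$ of variables; a decidable set of $\mathcal{L}$-constraints; a computable function $\mathsf{V}$ giving each constraint $\phi$ a finite set $\mathsf{V}(\phi)$ of variables; a nonempty set of $\mathcal{L}$-interpretations $\mathcal{I}$, each with nonempty domain $\mathcal{D}$ and set $\mathsf{ASS}$ of assignments $\mathsf{VAR}\to\mathcal{D}$; and solution sets $[\![\phi]\!]^{\mathcal{I}}\subseteq\mathsf{ASS}$ depending only on the values of variables in $\mathsf{V}(\phi)$. $\mathcal{R}(\mathcal{L})$ adds relation symbols $\mathcal{R}$ with arities; an atom is $r(\vec x)$ with $\vec x$ a tuple of pairwise distinct variables of the right length. A quantitative definite clause specification $\mathcal{P}_F$ is a finite set of clauses $r(\vec{x})\leftarrow_f \phi \,\&\, q_1(\vec{x}_1)\,\&\ldots\&\, q_k(\vec{x}_k)$ ($r(\vec x),q_j(\vec x_j)$ atoms, $\phi$ an $\mathcal{L}$-constraint, $k\ge0$, $f\in(0,1]$). An $\mathcal{R}(\mathcal{L})$-interpretation $\mathcal{A}$ extending $\mathcal{I}$ has the domain of $\mathcal{I}$,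 agrees with $\mathcal{I}$ on $\mathcal{L}$-constraints, and assigns to each $n$-ary $r$ a membership function $\mu(\_\,;r^{\mathcal{A}}):\mathcal{D}^n\to[0,1]$. For interpretations extending the same $\mathcal{I}$ (base equivalent), $\mathcal{A}\subseteq\mathcal{A}'$ iff $\mu(\alpha(\vec x);r^{\mathcal{A}})\le\mu(\alpha(\vec x);r^{\mathcal{A}'})$ for all $r,\alpha,\vec x$. $\mathcal{A}$ (extending $\mathcal{I}$) is a model of $\mathcal{P}_F$ iff for each $\alpha\in\mathsf{ASS}$ and clause $r(\vec{x})\leftarrow_f \phi \,\&\, q_1(\vec{x}_1)\,\&\ldots\&\, q_k(\vec{x}_k)$ in $\mathcal{P}_F$: if $\alpha\in[\![\phi]\!]^{\mathcal{I}}$ then $\mu(\alpha(\vec x);r^{\mathcal{A}})\ge f\times\min\{\mu(\alpha(\vec x_j);q_j^{\mathcal{A}})\mid 1\le j\le k\}$ ($\min\emptyset=1$). A minimal model of $\mathcal{P}_F$ is, for some $\mathcal{L}$-interpretation $\mathcal{I}$, a model $\mathcal{A}$ of $\mathcal{P}_F$ extending $\mathcal{I}$ with $\mathcal{A}\subseteq\mathcal{B}$ for every model $\mathcal{B}$ of $\mathcal{P}_F$ extending $\mathcal{I}$. (Models of a single formula $r(\vec x)\leftarrow_f\varphi$ are defined by the same condition with $k=0$.) Goals are (by convention) of the form $G=r(\vec x)\,\&\,\phi$ with $r(\vec x)$ an atom and $\phi$ an $\mathcal{L}$-constraint. An interpretation $\mathcal{A}$ is a model of $\{\varphi\ {}_v\!\!\rightarrow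 r(\vec x)\,\&\,\phi\}$ iff $[\![\varphi]\!]^{\mathcal{A}}\subseteq[\![\phi]\!]^{\mathcal{A}}$ and $\mathcal{A}$ is a model of $\{r(\vec x)\leftarrow_v\varphi\}$. The formula $\varphi\ {}_v\!\!\rightarrow G$ is a logical consequence of $\mathcal{P}_F$ iff every model of $\mathcal{P}_F$ (over any $\mathcal{L}$-interpretation) is a model of $\{\varphi\ {}_v\!\!\rightarrow G\}$. *)

From Stdlib Require Import Reals List.
From Stdlib Require Vectors.Fin.
Open Scope R_scope.

(** A constraint language L. The signature is left implicit: it only serves to
    build the (abstract) type of constraints [Constr]. *)
Record ConstraintLanguage := {
  Var : Type;
  var_eq_dec : forall x y : Var, {x = y} + {x <> y};
  var_infinite : forall l : list Var, exists x, ~ In x l;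
  Constr : Type;
  V : Constr -> list Var;
  Interp : Type;
  interp_ne : inhabited Interp;
  Dom : Interp -> Type;
  dom_ne : forall I, inhabited (Dom I);
  sol : forall I, Constr -> (Var -> Dom I) -> Prop;
  sol_local : forall I phi (a b : Var -> Dom I),
      (forall x, In x (V phi) -> a x = b x) -> (sol I phi a <-> sol I phi b)
}.

Set Implicit Arguments.

Section QDC.
Variable L : ConstraintLanguage.
Variable Rel : Type.
Variable arity : Rel -> nat.

Record Atom := {
  at_rel : Rel;
  at_args : Fin.t (arity at_rel) -> Var L;
  at_inj : forall i j, at_args i = at_args j -> i = j
}.

(** A quantitative definite clause  r(x) <-_f phi & q1(x1) & ... & qk(xk). *)
Record Clause := {
  cl_head : Atom;
  cl_f : R;
  cl_f_range : 0 < cl_f <= 1;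
  cl_constr : Constr L;
  cl_body : list Atom
}.

Definition Spec := list Clause.

Unset Implicit Arguments.
Record RInterp (I : Interp L) := {
  mu : forall r : Rel, (Fin.t (arity r) -> Dom L I) -> R;
  mu_range : forall r (d : Fin.t (arity r) -> Dom L I), 0 <= mu r d <= 1
}.

Set Implicit Arguments.
Definition atom_val {I} (A : RInterp I) (a : Atom) (alpha : Var L -> Dom L I) : R :=
  mu I A (at_rel a) (fun i => alpha (at_args a i)).

Definition min_list (l : list R) : R := fold_right Rmin 1 l.

Definition is_model (P : Spec) {I} (A : RInterp I) : Prop :=
  forall c, In c P -> forall alpha : Var L -> Dom L I,
    sol L I (cl_constr c) alpha ->
    atom_val A (cl_head c) alpha >=
      cl_f c * min_list (map (fun q => atom_val A q alpha) (cl_body c)).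

(** A ⊆ B for base-equivalent interpretations *)
Definition rsub {I} (A B : RInterp I) : Prop :=
  forall (a : Atom) (alpha : Var L -> Dom L I), atom_val A a alpha <= atom_val B a alpha.

Definition minimal_model (P : Spec) {I} (A : RInterp I) : Prop :=
  is_model P A /\ forall B : RInterp I, is_model P B -> rsub A B.

Record Goal := { g_atom : Atom; g_constr : Constr L }.

(** A is a model of { r(x) <-_f phi } (formula with k = 0, min ∅ = 1) *)
Definition is_model_formula {I} (A : RInterp I) (a : Atom) (f : R) (phi : Constr L) : Prop :=
  forall alpha : Var L -> Dom L I, sol L I phi alpha -> atom_val A a alpha >= f * 1.

Definition is_model_goal {I} (A : RInterp I) (phi : Constr L) (v : R) (G : Goal) : Prop :=
  (forall alpha, sol L I phi alpha -> sol L I (g_constr G) alpha) /\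
  is_model_formula A (g_atom G) v phi.

Definition logical_consequence (P : Spec) (phi : Constr L) (v : R) (G : Goal) : Prop :=
  forall (I : Interp L) (A : RInterp I), is_model P A -> is_model_goal A phi v G.

End QDC.

(** The models of a specification over a fixed L-interpretation are closed
    under pointwise infima: the clause condition is monotone in the body
    values.  Since the constant-1 interpretation is always a model, every
    L-interpretation carries a minimal model, namely the infimum of all of
    its models.  A goal formula [phi _v-> G] only asks for a lower bound on
    one membership value, so it holds in every model as soon as it holds in
    the minimal model below it. *)

From Stdlib Require Import Reals List Lra.
Open Scope R_scope.

Lemma glb_of_bounded_below (E : R -> Prop) (lb : R) :
  (forall x, E x -> lb <= x) -> (exists x, E x) ->
  { m : R | (forall x, E x -> m <= x) /\
            (forall y, (forall x, E x -> y <= x) -> y <= m) }.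
Proof.
  intros Hlb Hne.
  assert (Hbound : bound (fun y => E (- y))).
  { exists (- lb). intros y Hy. specialize (Hlb _ Hy). lra. }
  assert (Hne' : exists y, E (- y)).
  { destruct Hne as [x Hx]. exists (- x). now rewrite Ropp_involutive. }
  destruct (completeness _ Hbound Hne') as [s [Hub Hleast]].
  exists (- s). split.
  - intros x Hx. assert (- x <= s) by (apply Hub; now rewrite Ropp_involutive).
    lra.
  - intros y Hy. assert (s <= - y); [|lra].
    apply Hleast. intros z Hz. specialize (Hy _ Hz). lra.
Qed.

Lemma min_list_le_1 (l : list R) : min_list l <= 1.
Proof.
  induction l as [|x l IH]; simpl; [lra|].
  eapply Rle_trans; [apply Rmin_r | exact IH].
Qed.

Lemma scale_le_1 (f m : R) : 0 < f <= 1 -> m <= 1 -> f * m <= 1.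
Proof. intros Hf Hm. destruct (Rle_or_lt 0 m); nra. Qed.

Lemma min_list_map_le {T : Type} (f g : T -> R) (l : list T) :
  (forall q, f q <= g q) -> min_list (map f l) <= min_list (map g l).
Proof.
  intros Hfg; induction l as [|a l IH]; simpl; [lra|].
  eapply Rle_trans; [apply Rle_min_compat_r, Hfg | apply Rle_min_compat_l, IH].
Qed.

Section MinimalModel.
Variables (L : ConstraintLanguage) (Rel : Type) (arity : Rel -> nat).
Variables (P : Spec L arity) (I : Interp L).

Definition top_interp : RInterp L Rel arity I.
Proof.
  refine {| mu := fun _ _ => 1 |}. intros; lra.
Defined.

Lemma top_interp_model : is_model P top_interp.
Proof.
  intros c _ alpha _. apply Rle_ge.
  apply scale_le_1; [apply cl_f_range | apply min_list_le_1].
Qed.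

Definition model_values (r : Rel) (d : Fin.t (arity r) -> Dom L I) (y : R) : Prop :=
  exists B : RInterp L Rel arity I, is_model P B /\ y = mu L Rel arity I B r d.

Definition inf_model_values (r : Rel) (d : Fin.t (arity r) -> Dom L I) : R.
Proof.
  refine (proj1_sig (glb_of_bounded_below (model_values r d) 0 _ _)).
  - intros y [B [_ ->]]. apply (mu_range L Rel arity I B).
  - exists 1. now exists top_interp; split; [apply top_interp_model|].
Defined.

Lemma inf_model_values_le r d (B : RInterp L Rel arity I) :
  is_model P B -> inf_model_values r d <= mu L Rel arity I B r d.
Proof.
  intros HB. apply (proj1 (proj2_sig (glb_of_bounded_below _ _ _ _))).
  now exists B.
Qed.

Lemma inf_model_values_glb r d (y : R) :
  (forall B : RInterp L Rel arity I, is_model P B -> y <= mu L Rel arity I B r d) ->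
  y <= inf_model_values r d.
Proof.
  intros Hy. apply (proj2 (proj2_sig (glb_of_bounded_below _ _ _ _))).
  intros x [B [HB ->]]. now apply Hy.
Qed.

Lemma inf_model_values_range r d : 0 <= inf_model_values r d <= 1.
Proof.
  split.
  - apply inf_model_values_glb. intros B _. apply (mu_range L Rel arity I B).
  - apply (inf_model_values_le r d top_interp top_interp_model).
Qed.

Definition inf_model : RInterp L Rel arity I :=
  {| mu := inf_model_values; mu_range := inf_model_values_range |}.

Lemma inf_model_rsub (B : RInterp L Rel arity I) :
  is_model P B -> rsub inf_model B.
Proof. intros HB a alpha. now apply inf_model_values_le. Qed.

Lemma inf_model_model : is_model P inf_model.
Proof.
  intros c Hc alpha Hsol. apply Rle_ge, inf_model_values_glb.
  intros B HB. apply Rge_le.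
  eapply Rge_trans; [exact (HB c Hc alpha Hsol)|]. apply Rle_ge.
  pose proof (cl_f_range c).
  apply Rmult_le_compat_l; [lra|].
  apply min_list_map_le. intros q. now apply inf_model_rsub.
Qed.

Lemma inf_model_minimal : minimal_model P inf_model.
Proof. split; [exact inf_model_model | exact inf_model_rsub]. Qed.

End MinimalModel.

Lemma is_model_goal_rsub {L : ConstraintLanguage} {Rel : Type} {arity : Rel -> nat}
    {I : Interp L} (A B : RInterp L Rel arity I) phi v (G : Goal L arity) :
  rsub A B -> is_model_goal A phi v G -> is_model_goal B phi v G.
Proof.
  intros HAB [Hconstr Hval]. split; [exact Hconstr|].
  intros alpha Hsol. specialize (Hval alpha Hsol).
  specialize (HAB (g_atom G) alpha). lra.
Qed.

Theorem proposition1 (L : ConstraintLanguage) (Rel : Type) (arity : Rel -> nat)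
  (P : Spec L arity) (phi : Constr L) (G : Goal L arity) (v : R) :
  logical_consequence P phi v G <->
  (forall (I : Interp L) (A : RInterp L Rel arity I),
      minimal_model P A -> is_model_goal A phi v G).
Proof.
  split.
  - intros Hcons I A [HA _]. now apply Hcons.
  - intros Hmin I A HA.
    apply (is_model_goal_rsub (inf_model L Rel arity P I)).
    + now apply inf_model_rsub.
    + apply Hmin, inf_model_minimal.
Qed.
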